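(* Let $k$ be a positive integer, $a=3k+2$, $b=2a-3$, $c=2a-1$, $S=\{a,b,c\}$, $G=\langle S\rangle$. For $i\in[0,2k+1]$ let $I_{i,k}=\{ia-3\lfloor i/2\rfloor\}\cup[ia-3\lfloor i/2\rfloor+2,\,ia]$, and let $H_{9,k}=\bigcup_{i=0}^{2k+1}I_{i,k}\cup[2ka+4,\infty[$. Then: (1) $x\in G$ if and only if $x=(s+2q)a-3q+2r$ for some $q,r,s\in\mathbb{N}$ with $0\le r\le q$; (2) $I_{i,k}<I_{i+1,k}$ for every $i\in[0,2k]$; (3) $G=H_{9,k}$; (4) $H_{9,k}$ is a $3$-permutation numerical semigroup.
   Context: $\mathbb{N}=\{0,1,2,\dots\}$. A numerical semigroup is a submonoid $G$ of $(\mathbb{N},+,0)$ with $\mathbb{N}\setminus G$ finite; $\langle S\rangle$ is the submonoid generated by $S$. Writing the elements of a numerical semigroup as $0=g_0<g_1<g_2<\cdots$, it is an $n$-permutation numerical semigroup if it is generated by $\{g_1,\dots,g_n\}$ and for every $k\in\mathbb{N}$ the tuple $(g_{kn+1}\bmod n,\dots,g_{kn+n}\bmod n)$ contains exactly one representative of each residue class mod $n$. Notation: $[u,v]=\{x\in\mathbb{N}:u\le x\le v\}$ (empty if $u>v$), $[u,\infty[=\{x\in\mathbb{N}:x\ge u\}$; for nonempty $X,Y$, $X<Y$ means $x<y$ for all $x\in X,y\in Y$. *)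

From mathcomp Require Import all_boot.
Set Implicit Arguments. Unset Strict Implicit. Unset Printing Implicit Defensive.

Inductive gen (S : nat -> Prop) : nat -> Prop :=
| gen0 : gen S 0
| genS : forall x y, S x -> gen S y -> gen S (x + y).

Definition submonoid (G : nat -> Prop) : Prop :=
  G 0 /\ (forall x y, G x -> G y -> G (x + y)).

Definition numerical_semigroup (G : nat -> Prop) : Prop :=
  submonoid G /\ exists N, forall x, N <= x -> G x.

Definition rank_below (G : nat -> Prop) (x j : nat) : Prop :=
  exists s : seq nat, [/\ uniq s, (forall y, y \in s <-> (y < x /\ G y))
                       & size s = j].

(* elem G j x : x = g_j, the j-th element (from g_0 = 0) of G in increasing order *)
Definition elem (G : nat -> Prop) (j x : nat) : Prop := G x /\ rank_below G x j.

Definition perm_num_semigroup (n : nat) (G : nat -> Prop) : Prop :=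
  [/\ numerical_semigroup G,
      (forall x, G x <-> gen (fun y => exists2 i, 1 <= i <= n & elem G i y) x)
    & forall m r, r < n ->
        exists! i, (1 <= i <= n) /\ exists2 x, elem G (m * n + i) x & x %% n = r].

Definition Iik (k i : nat) (x : nat) : Prop :=
  let a := 3 * k + 2 in
  x = i * a - 3 * (i %/ 2) \/ (i * a - 3 * (i %/ 2) + 2 <= x <= i * a).

Definition H9 (k : nat) (x : nat) : Prop :=
  (exists2 i, i <= 2 * k + 1 & Iik k i x) \/ 2 * k * (3 * k + 2) + 4 <= x.

(* Writing an element of G as (s + 2q) a - 3q + 2r with r <= q shows that G is
   the union of all the blocks I_{i,k} (take i = s + 2q).  The blocks with
   i <= 2k+1 are separated by gaps, those with i > 2k+1 lie beyond 2ka + 4, and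
   every x >= 2ka + 4 is the top of I_{x/a} or lies in the interval part of
   I_{x/a + 1}; hence G = H_{9,k}.
   For the permutation property we count elements: for i >= 2 the block I_{i,k}
   has 3 floor(i/2) elements, so its top element i a has rank 1 modulo 3.  Thus the
   elements of ranks 3m+1, 3m+2, 3m+3 are either three consecutive integers x,
   x+1, x+2, or x = i a followed by the two smallest elements of I_{i+1,k}, which
   are congruent to x + 2 and x + 1 modulo 3 because a = 2 (mod 3). *)

From mathcomp Require Import all_boot zify.

Set Implicit Arguments. Unset Strict Implicit. Unset Printing Implicit Defensive.

Section Generated.

Variable S : nat -> Prop.

Lemma gen_add x y : gen S x -> gen S y -> gen S (x + y).
Proof.
elim=> [|x' y' Sx' _ IH] Gy; first by rewrite add0n.
by rewrite -addnA; apply: genS (IH Gy).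
Qed.

Lemma gen_muln n g : S g -> gen S (n * g).
Proof.
move=> Sg; elim: n => [|n IH]; first exact: gen0.
by rewrite mulSn; apply: genS.
Qed.

Lemma eq_gen S' : (forall x, S x <-> S' x) -> forall x, gen S x <-> gen S' x.
Proof.
move=> eqS x; split; elim=> [|x' y' Sx' _ IH]; try exact: gen0;
  by apply: genS IH; apply/eqS.
Qed.

End Generated.

Lemma gen3P a b c x : gen (fun y => y = a \/ y = b \/ y = c) x <->
  exists s d r, x = s * a + d * b + r * c.
Proof.
split.
- elim=> [|x' y' Sx' _ [s [d [r ->]]]]; first by exists 0, 0, 0.
  by case: Sx' => [|[|]] ->; [exists s.+1, d, r | exists s, d.+1, r | exists s, d, r.+1]; lia.
- move=> [s [d [r ->]]].
  apply: gen_add; first apply: gen_add.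
  - by apply: gen_muln; left.
  - by apply: gen_muln; right; left.
  - by apply: gen_muln; right; right.
Qed.

Section RankOf.

Variable P : pred nat.

Definition rank_of x := count P (iota 0 x).

Lemma rank_ofS x : rank_of x.+1 = rank_of x + P x.
Proof. by rewrite /rank_of -addn1 iotaD count_cat /= addn0. Qed.

Lemma rank_ofS_in x : P x -> rank_of x.+1 = (rank_of x).+1.
Proof. by move=> Px; rewrite rank_ofS Px addn1. Qed.

Lemma rank_ofS_out x : ~~ P x -> rank_of x.+1 = rank_of x.
Proof. by move/negbTE=> Px; rewrite rank_ofS Px addn0. Qed.

Lemma rank_ofD x n : rank_of (x + n) = rank_of x + count P (iota x n).
Proof. by rewrite /rank_of iotaD count_cat. Qed.

Lemma rank_of_run x n : (forall t, x <= t < x + n -> P t) ->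
  rank_of (x + n) = rank_of x + n.
Proof.
move=> Pxn; rewrite rank_ofD (@eq_in_count _ _ predT) ?count_predT ?size_iota //.
by move=> t; rewrite mem_iota => /Pxn.
Qed.

Lemma rank_of_gap x n : (forall t, x <= t < x + n -> ~~ P t) ->
  rank_of (x + n) = rank_of x.
Proof.
move=> Pxn; rewrite rank_ofD (@eq_in_count _ _ pred0) ?count_pred0 ?addn0 //.
by move=> t; rewrite mem_iota => /Pxn /negbTE.
Qed.

Lemma leq_rank_of : {homo rank_of : x y / x <= y}.
Proof. by move=> x y /subnKC <-; rewrite rank_ofD leq_addr. Qed.

Lemma rank_of_ltn x y : P x -> x < y -> rank_of x < rank_of y.
Proof.
by move=> Px /leq_rank_of; apply: leq_trans; rewrite rank_ofS_in.
Qed.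

Lemma rank_of_inj : {in P &, injective rank_of}.
Proof.
move=> x y Px Py eq_r; case: (ltngtP x y) => // [/(rank_of_ltn Px)|/(rank_of_ltn Py)];
  by rewrite eq_r ltnn.
Qed.

End RankOf.

Section Elements.

Variables (G : nat -> Prop) (P : pred nat).
Hypothesis GP : forall x, reflect (G x) (P x).

Lemma rank_belowE x j : rank_below G x j <-> j = rank_of P x.
Proof.
have mem_filterE y : y \in filter P (iota 0 x) = (y < x) && P y.
  by rewrite mem_filter mem_iota andbC.
split.
- move=> [s [uniq_s mem_s <-]]; rewrite /rank_of -size_filter.
  apply/perm_size/uniq_perm; rewrite ?filter_uniq ?iota_uniq // => y.
  by rewrite mem_filterE; apply/idP/andP => [/mem_s [-> /GP]|[lt_yx /GP Gy]] //; apply/mem_s.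
- move=> ->; exists (filter P (iota 0 x)); split; rewrite ?filter_uniq ?iota_uniq ?size_filter //.
  by move=> y; rewrite mem_filterE; split => [/andP[-> /GP]|[-> /GP]].
Qed.

Lemma elemE j x : elem G j x <-> P x /\ rank_of P x = j.
Proof. by rewrite /elem rank_belowE; split=> [[/GP Px ->]|[/GP Gx <-]]. Qed.

Hypothesis P_cofinite : exists N, forall x, N <= x -> P x.

Lemma rank_of_onto j : exists x, P x && (rank_of P x == j).
Proof.
have [N PN] := P_cofinite.
have ex_gt : exists y, j < rank_of P y.
  exists (N + j.+1); rewrite rank_of_run; first lia.
  by move=> t /andP[le_Nt _]; apply: PN.
case: (ex_minnP ex_gt) => -[|y]; first by rewrite /rank_of.
move=> lt_jy min_y; exists y.
have le_yj : rank_of P y <= j by rewrite leqNgt; apply/negP => /min_y; rewrite ltnn.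
by move: lt_jy; rewrite rank_ofS; case: (P y) => /=; lia.
Qed.

Definition nth_elem j := ex_minn (rank_of_onto j).

Lemma elem_nth_elem j : elem G j (nth_elem j).
Proof. by apply/elemE; rewrite /nth_elem; case: ex_minnP => x /andP[-> /eqP]. Qed.

Lemma elem_nthE j x : elem G j x <-> x = nth_elem j.
Proof.
split=> [|->]; last exact: elem_nth_elem.
move=> /elemE [Px rx]; have /elemE [Pn rn] := elem_nth_elem j.
by apply: (rank_of_inj Px Pn); rewrite rx rn.
Qed.

Lemma perm_residues n :
  (forall m, uniq (mkseq (fun i => nth_elem (m * n + i.+1) %% n) n)) ->
  forall m r, r < n ->
  exists! i, (1 <= i <= n) /\ exists2 x, elem G (m * n + i) x & x %% n = r.
Proof.
move=> uniq_res m r lt_rn; set f := fun i => nth_elem (m * n + i.+1) %% n.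
(* n distinct residues below n exhaust [0, n). *)
have [_ res_full] : (size (mkseq f n) = size (iota 0 n)) * (mkseq f n =i iota 0 n).
  apply: uniq_min_size; rewrite ?uniq_res ?size_mkseq ?size_iota //.
  by move=> y /mapP [i _ ->]; rewrite mem_iota ltn_pmod //; lia.
have /mapP [i] : r \in mkseq f n by rewrite res_full mem_iota.
rewrite mem_iota => /andP[_ lt_in] ->.
exists i.+1; split.
  by split; [lia | exists (nth_elem (m * n + i.+1)); first exact: elem_nth_elem].
move=> j [/andP[j_gt0 le_jn] [x /elem_nthE -> eq_res]].
have /mkseq_uniqP inj_f := uniq_res m.
have -> : j = (j.-1).+1 by lia.
by congr _.+1; apply: inj_f; rewrite /= ?inE; [lia | lia | rewrite /f prednK].
Qed.

End Elements.

Lemma gen_abcP a x : 2 <= a ->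
  gen (fun y => y = a \/ y = 2 * a - 3 \/ y = 2 * a - 1) x <->
  exists q r s, r <= q /\ x = (s + 2 * q) * a - 3 * q + 2 * r.
Proof.
move=> a_ge2; rewrite gen3P; split.
- by move=> [s [d [r ->]]]; exists (d + r), r, s; split; nia.
- move=> [q [r [s [le_rq ->]]]]; exists s, (q - r), r; nia.
Qed.

Section H9Semigroup.

Variable k : nat.
Local Notation a := (3 * k + 2).

Definition Imin i := i * a - 3 * (i %/ 2).

Lemma IikE i x : Iik k i x <-> x = Imin i \/ Imin i + 2 <= x <= i * a.
Proof. by []. Qed.

Lemma Iik_gen i x : Iik k i x ->
  exists q r s, r <= q /\ x = (s + 2 * q) * a - 3 * q + 2 * r.
Proof.
(* With i a - x = 3 w + rho and rho < 3, take q = w + rho and r = rho. *)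
rewrite IikE /Imin => Ix; set e := i * a - x; set q := e %/ 3 + e %% 3.
have le_qi : 2 * q <= i by lia.
by exists q, (e %% 3), (i - 2 * q); rewrite subnK //; split; lia.
Qed.

Lemma gen_Iik q r s : r <= q -> Iik k (s + 2 * q) ((s + 2 * q) * a - 3 * q + 2 * r).
Proof. rewrite IikE /Imin; lia. Qed.

Lemma gen_abc_Iik x : gen (fun y => y = a \/ y = 2 * a - 3 \/ y = 2 * a - 1) x <->
  exists i, Iik k i x.
Proof.
rewrite gen_abcP; last lia.
split=> [[q [r [s [le_rq ->]]]]|[i /Iik_gen //]].
by exists (s + 2 * q); apply: gen_Iik.
Qed.

Lemma Imax_lt_Imin i j : i < j <= 2 * k + 1 -> i * a + 2 <= Imin j.
Proof.
move=> /andP[lt_ij le_j]; have : i.+1 * a <= j * a by rewrite leq_mul2r lt_ij orbT.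
rewrite /Imin; lia.
Qed.

Lemma Iik_ltn i x y : i <= 2 * k -> Iik k i x -> Iik k i.+1 y -> x < y.
Proof.
move=> le_i /IikE Ix /IikE Iy.
have := @Imax_lt_Imin i i.+1; rewrite /Imin in Ix Iy *; lia.
Qed.

Lemma Imin_le_Imax i : Imin i <= i * a.
Proof. exact: leq_subr. Qed.

Lemma Imin_tail : Imin (2 * k + 1) = 2 * k * a + 2.
Proof. rewrite /Imin; lia. Qed.

Definition H9b : pred nat := fun x =>
  has (fun i => (x == Imin i) || (Imin i + 2 <= x <= i * a)) (iota 0 (2 * k + 2))
  || (2 * k * a + 4 <= x).

Lemma H9P x : reflect (H9 k x) (H9b x).
Proof.
apply: (iffP orP) => [[/hasP [i]|tail]|[[i le_i /IikE Ix]|tail]]; try by right.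
- rewrite mem_iota => /andP[_ lt_i] /orP Ix; left; exists i; first lia.
  by apply/IikE; case: Ix => [/eqP|]; [left | right].
- left; apply/hasP; exists i; first by rewrite mem_iota; lia.
  by case: Ix => [->|->]; rewrite ?eqxx ?orbT.
Qed.

Lemma H9b_cofinite : exists N, forall x, N <= x -> H9b x.
Proof. by exists (2 * k * a + 4) => x le_x; apply/H9P; right. Qed.

Hypothesis k_gt0 : 0 < k.

Lemma Imin_mono : {homo Imin : i j / i <= j}.
Proof.
move=> i j /subnKC <-; set d := j - i.
have : d <= d * k by rewrite leq_pmulr.
rewrite /Imin; lia.
Qed.

Lemma H9_Iik x : H9 k x <-> exists i, Iik k i x.
Proof.
split=> [[[i _ Ix]|tail]|[i Ix]]; first by exists i.
- have a_gt0 : 0 < a by rewrite addn2.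
  have le_kd : 2 * k <= x %/ a by rewrite leq_divRL //; lia.
  move: (divn_eq x a) (ltn_pmod x a_gt0) le_kd tail.
  move: (x %/ a) (x %% a) => d r -> lt_ra le_kd tail.
  have [r0|r_gt0] := posnP r; first by exists d; apply/IikE; rewrite /Imin; lia.
  exists d.+1; apply/IikE; rewrite /Imin.
  have [d_eq|lt_kd] : d = 2 * k \/ 2 * k < d by lia.
    by subst d; lia.
  lia.
- have [le_i|lt_i] := leqP i (2 * k + 1); first by left; exists i.
  right; have := Imin_mono lt_i; move: Ix; rewrite IikE /Imin; lia.
Qed.

Lemma gen_abc_H9 x :
  gen (fun y => y = a \/ y = 2 * a - 3 \/ y = 2 * a - 1) x <-> H9 k x.
Proof. by rewrite gen_abc_Iik H9_Iik. Qed.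

Lemma notin_H9_gap i x : i <= 2 * k -> i * a < x < Imin i.+1 -> ~ H9 k x.
Proof.
move=> le_i /andP[lt_ix lt_x] [[j le_j /IikE Ix]|tail].
- have [le_ji|lt_ij] := leqP j i.
    have : j * a <= i * a by rewrite leq_mul2r le_ji orbT.
    by have := Imin_le_Imax j; lia.
  by have := Imin_mono lt_ij; lia.
- have : Imin i.+1 <= Imin (2 * k + 1) by apply: Imin_mono; lia.
  by rewrite Imin_tail; lia.
Qed.

Lemma notin_H9_Imin_succ i : i <= 2 * k + 1 -> ~ H9 k (Imin i).+1.
Proof.
move=> le_i [[j le_j /IikE Ix]|tail].
- have := @Imax_lt_Imin i j; have := @Imax_lt_Imin j i.
  by move: Ix; rewrite /Imin; case: (ltngtP i j); lia.
- have : Imin i <= Imin (2 * k + 1) by apply: Imin_mono.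
  by rewrite Imin_tail; lia.
Qed.

Local Notation rk := (rank_of H9b).

Lemma H9_Imin i : i <= 2 * k + 1 -> H9 k (Imin i).
Proof. by left; exists i => //; apply/IikE; left. Qed.

Lemma H9_Imax i : i <= 2 * k + 1 -> H9 k (i * a).
Proof. by left; exists i => //; apply/IikE; rewrite /Imin; lia. Qed.

Lemma rank_Imin_succ i : i <= 2 * k -> rk (Imin i.+1) = (rk (i * a)).+1.
Proof.
move=> le_i; have lt_Imin := @Imax_lt_Imin i i.+1.
have Hia : H9b (i * a) by apply/H9P/H9_Imax; lia.
rewrite -(rank_ofS_in Hia) -[Imin i.+1](@subnKC (i * a).+1); last lia.
apply: rank_of_gap => t lt_t; apply/H9P/(@notin_H9_gap i); lia.
Qed.

Lemma rank_Imin_add2 i : i <= 2 * k + 1 -> rk (Imin i + 2) = (rk (Imin i)).+1.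
Proof.
move=> le_i; rewrite addn2 rank_ofS_out; last exact/H9P/notin_H9_Imin_succ.
exact/rank_ofS_in/H9P/H9_Imin.
Qed.

Lemma rank_Imax i : 2 <= i <= 2 * k + 1 -> rk (i * a) = rk (Imin i) + 3 * (i %/ 2) - 1.
Proof.
move=> /andP[ge_i2 le_i]; have := Imin_le_Imax i.
rewrite -[i * a](@subnKC (Imin i + 2)); last by rewrite /Imin; lia.
rewrite rank_of_run ?rank_Imin_add2 //; first by rewrite /Imin; lia.
move=> t /andP[ge_t lt_t]; apply/H9P; left; exists i => //; apply/IikE; right; lia.
Qed.

Lemma rank_a : rk a = 1.
Proof.
have := rank_Imin_succ (leq0n (2 * k)).
by rewrite /Imin mul0n mul1n divn_small // muln0 subn0.
Qed.

Lemma rank_Imax_mod i : 1 <= i <= 2 * k + 1 -> rk (i * a) %% 3 = 1.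
Proof.
elim: i => [//|[_ _|i IH /andP[_ le_i]]]; first by rewrite mul1n rank_a.
by rewrite rank_Imax ?rank_Imin_succ; lia.
Qed.

Lemma rank_Imin_mod i : 2 <= i <= 2 * k + 1 -> rk (Imin i) %% 3 = 2.
Proof.
case: i => [//|i] /andP[ge_i le_i]; rewrite rank_Imin_succ; last lia.
by have := @rank_Imax_mod i; lia.
Qed.

Lemma H9_boundary x : H9 k x -> ~ (H9 k x.+1 /\ H9 k x.+2) ->
  [\/ x = 0, exists2 i, 2 <= i <= 2 * k + 1 & x = Imin i,
       exists2 i, 2 <= i <= 2 * k + 1 & x.+1 = i * a
     | exists2 i, 1 <= i <= 2 * k & x = i * a].
Proof.
move=> [[j le_j /IikE Ix]|tail] not_both; last by case: not_both; split; right; lia.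
case: j le_j Ix => [|[|j]] le_j; rewrite /Imin.
- by constructor 1; lia.
- by constructor 4; exists 1; lia.
case=> [x_eq|/andP[ge_x le_x]]; first by constructor 2; exists j.+2.
have [x2|[x1|x0]] : x.+2 <= j.+2 * a \/ x.+1 = j.+2 * a \/ x = j.+2 * a by lia.
- by case: not_both; split; left; exists j.+2 => //; apply/IikE; rewrite /Imin; lia.
- by constructor 3; exists j.+2; lia.
have [lt_j|j_eq] : j.+2 <= 2 * k \/ j.+2 = 2 * k + 1 by lia.
  by constructor 4; exists j.+2; lia.
by case: not_both; split; right; rewrite x0 j_eq; lia.
Qed.

Lemma block_residues x : H9 k x -> rk x %% 3 = 1 ->
  exists y z, [/\ H9 k y, H9 k z, rk y = (rk x).+1, rk z = (rk x).+2
                & uniq [:: x %% 3; y %% 3; z %% 3]].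
Proof.
move=> Hx rx; have Hxb : H9b x by apply/H9P.
have [/andP[Hx1 Hx2]|not_both] := boolP (H9b x.+1 && H9b x.+2).
  exists x.+1, x.+2; rewrite !rank_ofS_in //.
  by split; try apply/H9P; rewrite //= !inE; lia.
have not_both' : ~ (H9 k x.+1 /\ H9 k x.+2).
  by move=> [/H9P Hx1 /H9P Hx2]; rewrite Hx1 Hx2 in not_both.
have [x0|[i le_i x_eq]|[i le_i x1_eq]|[i le_i x_eq]] := H9_boundary Hx not_both'.
- by rewrite x0 in rx.
- by rewrite x_eq rank_Imin_mod in rx.
- by have := @rank_Imax_mod i; rewrite -x1_eq rank_ofS_in //; lia.
- exists (Imin i.+1), (Imin i.+1 + 2).
  rewrite rank_Imin_add2 ?rank_Imin_succ -?x_eq; try lia.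
  split=> //.
  + by apply: H9_Imin; lia.
  + by left; exists i.+1; [lia | apply/IikE; rewrite /Imin; lia].
  + by rewrite /= !inE x_eq /Imin; lia.
Qed.

Local Notation g := (nth_elem H9b_cofinite).

Lemma H9_block_uniq m : uniq (mkseq (fun i => g (m * 3 + i.+1) %% 3) 3).
Proof.
have /(elemE H9P) [/H9P Hx rx] := elem_nth_elem H9P H9b_cofinite (m * 3 + 1).
have rx3 : rk (g (m * 3 + 1)) %% 3 = 1 by rewrite rx; lia.
have [y [z [Hy Hz ry rz uniq_xyz]]] := block_residues Hx rx3.
have elem_g j v : H9 k v -> rk v = j -> g j = v.
  by move=> /H9P Hv rv; symmetry; apply/(elem_nthE H9P); apply/(elemE H9P).
rewrite /=.
have -> : g (m * 3 + 2) = y by apply: elem_g; rewrite // ry rx; lia.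
have -> : g (m * 3 + 3) = z by apply: elem_g; rewrite // rz rx; lia.
exact: uniq_xyz.
Qed.

Lemma H9_first_elems y : (exists2 i, 1 <= i <= 3 & elem (H9 k) i y) <->
  y = a \/ y = 2 * a - 3 \/ y = 2 * a - 1.
Proof.
have Imin2 : Imin 2 = 2 * a - 3 by rewrite /Imin; lia.
have [Ha Hb Hc] : [/\ H9b a, H9b (2 * a - 3) & H9b (2 * a - 1)].
  by split; apply/H9P; left; [exists 1 | exists 2 | exists 2]; rewrite ?IikE /Imin; lia.
have rb : rk (2 * a - 3) = 2.
  by rewrite -Imin2 rank_Imin_succ ?mul1n ?rank_a //; lia.
have rc : rk (2 * a - 1) = 3.
  by rewrite (_ : 2 * a - 1 = Imin 2 + 2) ?rank_Imin_add2 ?Imin2 ?rb // /Imin; lia.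
split=> [[i le_i /(elemE H9P) [Hy ry]]|].
- have [i1|[i2|i3]] : i = 1 \/ i = 2 \/ i = 3 by lia.
  + by left; apply: (rank_of_inj Hy Ha); rewrite ry rank_a.
  + by right; left; apply: (rank_of_inj Hy Hb); rewrite ry rb.
  + by right; right; apply: (rank_of_inj Hy Hc); rewrite ry rc.
- case=> [->|[->|->]]; [exists 1 | exists 2 | exists 3] => //; apply/(elemE H9P); split => //.
  exact: rank_a.
Qed.

End H9Semigroup.

Theorem lemma4p9 (k : nat) (hk : 0 < k) :
  let a := 3 * k + 2 in
  let b := 2 * a - 3 in
  let c := 2 * a - 1 in
  let G := gen (fun x => x = a \/ x = b \/ x = c) in
  [/\ (forall x, G x <-> exists q r s, r <= q /\ x = (s + 2 * q) * a - 3 * q + 2 * r),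
      (forall i, i <= 2 * k -> forall x y, Iik k i x -> Iik k i.+1 y -> x < y),
      (forall x, G x <-> H9 k x)
    & perm_num_semigroup 3 (H9 k)].
Proof.
move=> a b c G; have GE x : G x <-> H9 k x := gen_abc_H9 hk x.
split => //.
- by move=> x; apply: gen_abcP; lia.
- by move=> i le_i x y; apply: Iik_ltn.
split.
- split; last by exists (2 * k * a + 4) => x; right.
  by split=> [|x y]; rewrite -!GE; [exact: gen0 | exact: gen_add].
- by move=> x; rewrite -GE; apply: eq_gen => y; rewrite H9_first_elems.
- by move=> m r; apply: (perm_residues (H9P k) (H9_block_uniq hk)).
Qed.
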